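(* Let $\mathbb{K}$ be a totally ordered field and $\kappa$ an uncountable cardinal. Then $\mathbb{K}$ is algebraically $\kappa$-saturated if and only if $\mathbb{K}$ is both Cantor $\kappa$-complete and algebraically $\kappa$-saturated at infinity.
   Context: $\mathbb{K}$ is algebraically $\kappa$-saturated if every family of fewer than $\kappa$ open intervals $(a_\gamma,b_\gamma)$ in $\mathbb{K}$ with the finite intersection property has non-empty intersection. $\mathbb{K}$ is algebraically $\kappa$-saturated at infinity if every subset of $\mathbb{K}$ of cardinality less than $\kappa$ is bounded. $\mathbb{K}$ is Cantor $\kappa$-complete if every family of fewer than $\kappa$ closed bounded intervals $[a_\gamma,b_\gamma]$ in $\mathbb{K}$ with the finite intersection property has non-empty intersection. *)

From HB Require Import structures.
From mathcomp Require Import all_boot all_order all_algebra.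
From Stdlib Require Import List.
Set Implicit Arguments. Unset Strict Implicit. Unset Printing Implicit Defensive.
Import Order.TTheory GRing.Theory Num.Theory.
Local Open Scope ring_scope.

(* Cardinal comparison of types: |A| <= |B| and |A| < |B|. A cardinal kappa is
   represented as the cardinality of a type Kappa. *)
Definition card_le (A B : Type) : Prop := exists f : A -> B, injective f.
Definition card_lt (A B : Type) : Prop := card_le A B /\ ~ card_le B A.

Definition uncountable (Kappa : Type) : Prop := ~ card_le Kappa nat.

Definition alg_saturated (K : realFieldType) (Kappa : Type) : Prop :=
  forall (I : Type) (a b : I -> K), card_lt I Kappa ->
    (forall s : list I, exists x : K, forall i, List.In i s -> a i < x < b i) ->
    exists x : K, forall i, a i < x < b i.

Definition alg_saturated_at_infinity (K : realFieldType) (Kappa : Type) : Prop :=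
  forall S : K -> Prop, card_lt {x : K | S x} Kappa ->
    exists l u : K, forall x, S x -> l <= x <= u.

Definition cantor_complete (K : realFieldType) (Kappa : Type) : Prop :=
  forall (I : Type) (a b : I -> K), card_lt I Kappa ->
    (forall s : list I, exists x : K, forall i, List.In i s -> a i <= x <= b i) ->
    exists x : K, forall i, a i <= x <= b i.

(* An open-interval family with the finite intersection property has a closed
   intersection point x by Cantor completeness.  If x sits at a right endpoint
   b_j, all left endpoints lie strictly below x, and saturation at infinity,
   applied to the fewer than kappa numbers 1/(x - a_i), bounds the distances
   x - a_i away from 0, so x can be moved slightly to the left into every open
   interval; otherwise it is moved slightly to the right.  Conversely, the open
   intervals (0, 1/(|y| + 1)) bound a small set S, and a closed family either
   has the open finite intersection property or two of its intervals touch in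
   a single point common to all of them. *)
From HB Require Import structures.
From mathcomp Require Import all_boot all_order all_algebra.
From Stdlib Require Import List Classical ClassicalEpsilon ProofIrrelevance.
Import Order.TTheory GRing.Theory Num.Theory.
Local Open Scope ring_scope.

Lemma card_le_trans (A B C : Type) : card_le A B -> card_le B C -> card_le A C.
Proof. by move=> [f f_inj] [g g_inj]; exists (fun x => g (f x)) => x y /g_inj/f_inj. Qed.

Lemma card_le_image {I T : Type} (f : I -> T) :
  card_le {t : T | exists i, t = f i} I.
Proof.
pose pre (t : {t : T | exists i, t = f i}) :=
  constructive_indefinite_description _ (proj2_sig t).
exists (fun t => proj1_sig (pre t)) => -[x px] [y py].
rewrite /pre /=; case: constructive_indefinite_description => i xi /=.
case: constructive_indefinite_description => j yj /= ij; subst j x y.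
by congr exist; apply: proof_irrelevance.
Qed.

Lemma card_lt_image {I T Kappa : Type} (f : I -> T) :
  card_lt I Kappa -> card_lt {t : T | exists i, t = f i} Kappa.
Proof.
have le_fI := card_le_image f.
move=> [le_IK not_le_KI]; split; first exact: card_le_trans le_fI le_IK.
by move=> le_Kf; apply: not_le_KI; apply: card_le_trans le_Kf le_fI.
Qed.

Lemma exists_argmax_In {d} {T : orderType d} {I : Type} (f : I -> T) (k : I) (s : list I) :
  exists2 m, In m (k :: s) & forall i, In i (k :: s) -> (f i <= f m)%O.
Proof.
elim: s => [|j s [m ms fm]].
  by exists k; [left | move=> i [<-|[]]].
have [fjm|fmj] := leP (f j) (f m).
  exists m; first by case: ms => [<-|ms]; [left|right; right].
  by move=> i [<-|[<-|si]] //; apply: fm; [left|right].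
exists j; first by right; left.
by move=> i [<-|[<-|si]] //; apply: le_trans (ltW fmj); apply: fm; [left|right].
Qed.

Lemma exists_argmin_In {d} {T : orderType d} {I : Type} (f : I -> T) (k : I) (s : list I) :
  exists2 m, In m (k :: s) & forall i, In i (k :: s) -> (f m <= f i)%O.
Proof. exact: (@exists_argmax_In _ T^d I). Qed.

Definition open_fip {K : realFieldType} {I : Type} (a b : I -> K) : Prop :=
  forall s : list I, exists x : K, forall i, In i s -> a i < x < b i.

Definition closed_fip {K : realFieldType} {I : Type} (a b : I -> K) : Prop :=
  forall s : list I, exists x : K, forall i, In i s -> a i <= x <= b i.

Section IntervalFamilies.
Context {K : realFieldType} {I : Type} {a b : I -> K}.

Lemma open_fip_closed : open_fip a b -> closed_fip a b.
Proof.
move=> fip s; have [x x_in] := fip s; exists x => i /x_in /andP[ax xb].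
by rewrite !ltW.
Qed.

Lemma open_fip_lt : open_fip a b -> forall i j, a i < b j.
Proof.
move=> fip i j; have [x x_in] := fip [:: i; j].
have /andP[ax _] := x_in i (or_introl erefl).
by have /andP[_ xb] := x_in j (or_intror (or_introl erefl)); apply: lt_trans xb.
Qed.

Lemma open_fip_of_lt : (forall i j, a i < b j) -> open_fip a b.
Proof.
move=> ab [|k s]; first by exists 0.
have [m _ am] := exists_argmax_In a k s.
have [n _ bn] := exists_argmin_In b k s.
have [m_mid mid_n] := midf_lt (ab m n).
exists ((a m + b n) / 2) => i si.
by rewrite (le_lt_trans (am i si) m_mid) (lt_le_trans mid_n (bn i si)).
Qed.

Lemma closed_fip_touch i j : closed_fip a b -> b j <= a i -> forall k, a k <= a i <= b k.
Proof.
move=> fip ba k; have [y y_in] := fip [:: i; j; k].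
have /andP[ay _] := y_in i (or_introl erefl).
have /andP[_ yb] := y_in j (or_intror (or_introl erefl)).
have -> : a i = y by apply/eqP; rewrite eq_le ay (le_trans yb ba).
exact: y_in k (or_intror (or_intror (or_introl erefl))).
Qed.

End IntervalFamilies.

Section Saturation.
Variables (K : realFieldType) (Kappa : Type).

Lemma alg_saturated_cantor_complete :
  alg_saturated K Kappa -> cantor_complete K Kappa.
Proof.
move=> sat I a b small fip.
have [[i [j ba]]|no_touch] := classic (exists i j, b j <= a i).
  by exists (a i); apply: closed_fip_touch fip ba.
have ab i j : a i < b j.
  by rewrite ltNge; apply/negP => ba; apply: no_touch; exists i, j.
have [x x_in] := sat I a b small (open_fip_of_lt ab).
by exists x => i; have /andP[ax xb] := x_in i; rewrite !ltW.
Qed.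

Lemma alg_saturated_at_infinity_of_saturated :
  alg_saturated K Kappa -> alg_saturated_at_infinity K Kappa.
Proof.
move=> sat S small.
pose r (y : {y : K | S y}) := (`|proj1_sig y| + 1)^-1.
have r_gt0 y : 0 < r y by rewrite invr_gt0 ltr_wpDl.
have [x x_in] := sat _ (fun _ => 0) r small (open_fip_of_lt (fun _ => r_gt0)).
exists (- x^-1), x^-1 => y Sy; rewrite -ler_norml.
have /andP[x_gt0 x_lt] := x_in (exist _ y Sy).
have : (r (exist _ y Sy))^-1 < x^-1 by rewrite ltf_pV2 ?posrE.
by rewrite invrK /= => lt_y; apply/ltW/(lt_trans _ lt_y); rewrite ltrDl.
Qed.

(* The bound [u] on the numbers [1 / f i] may be negative when [I] is empty,
   hence [|u|]. *)
Lemma alg_saturated_at_infinity_lbound {I : Type} {f : I -> K} :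
  alg_saturated_at_infinity K Kappa -> card_lt I Kappa -> (forall i, 0 < f i) ->
  exists2 e, 0 < e & forall i, e < f i.
Proof.
move=> sat_inf small f_gt0.
have [? [u bnd]] := sat_inf _ (card_lt_image (fun i => (f i)^-1) small).
have u1_gt0 : 0 < `|u| + 1 by rewrite ltr_wpDl.
exists (`|u| + 1)^-1 => [|i]; first by rewrite invr_gt0.
have /andP[_ fu] := bnd _ (ex_intro _ i erefl).
rewrite -[f i]invrK ltf_pV2 ?posrE ?invr_gt0 //.
by apply: (le_lt_trans fu); apply: (le_lt_trans (ler_norm u)); rewrite ltrDl.
Qed.

Lemma alg_saturated_of_cantor_complete :
  cantor_complete K Kappa -> alg_saturated_at_infinity K Kappa ->
  alg_saturated K Kappa.
Proof.
move=> cantor sat_inf I a b small fip.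
have [x x_in] := cantor I a b small (open_fip_closed fip).
have [[j xbj]|x_lt_b] := classic (exists j, b j = x).
  have a_lt_x i : a i < x by rewrite -xbj; apply: open_fip_lt fip i j.
  have gap_gt0 i : 0 < x - a i by rewrite subr_gt0.
  have [e e_gt0 e_lt] := alg_saturated_at_infinity_lbound sat_inf small gap_gt0.
  exists (x - e) => i; have /andP[_ xb] := x_in i.
  by rewrite ltrBrDl -ltrBrDr e_lt (lt_le_trans _ xb) // ltrBlDr ltrDl.
have b_gt_x i : x < b i.
  have /andP[_ xb] := x_in i; rewrite lt_neqAle xb andbT.
  by apply/eqP => xbi; apply: x_lt_b; exists i.
have gap_gt0 i : 0 < b i - x by rewrite subr_gt0.
have [e e_gt0 e_lt] := alg_saturated_at_infinity_lbound sat_inf small gap_gt0.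
exists (x + e) => i; have /andP[ax _] := x_in i.
by rewrite -ltrBrDl e_lt (le_lt_trans ax) // ltrDl.
Qed.

End Saturation.

Theorem mainTheorem16 (K : realFieldType) (Kappa : Type) (hk : uncountable Kappa) :
  alg_saturated K Kappa <->
  (cantor_complete K Kappa /\ alg_saturated_at_infinity K Kappa).
Proof.
split=> [sat | [cantor sat_inf]].
  split; [exact: alg_saturated_cantor_complete sat
         | exact: alg_saturated_at_infinity_of_saturated sat].
exact: alg_saturated_of_cantor_complete cantor sat_inf.
Qed.
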